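(* Let $(u,x)$ and $(u,y)$ be Burge words with the same top row $u$. If $x\sim y$, then $\Gamma(u,x)=\Gamma(u,y)$.
   Context: $\mathrm{Cay}_n$ is the set of Cayley permutations of length $n$ (words of positive integers in which every integer from $1$ to the maximum occurs), $\mathrm{WI}_n$ its weakly increasing elements. For $(u,v)\in\mathrm{WI}_n\times\mathrm{Cay}_n$, viewed as a biword with columns $\binom{u(i)}{v(i)}$, the Burge transpose $(u,v)^T$ turns each column $\binom{a}{b}$ into $\binom{b}{a}$ and sorts the columns increasingly by top entry, ties by decreasing bottom entry. With weak descent set $\mathrm{Des}(v)=\{i:v(i)\ge v(i+1)\}$, the Burge words of length $n$ are the pairs $(u,v)\in\mathrm{WI}_n\times\mathrm{Cay}_n$ with $\mathrm{Des}(u)\subseteq\mathrm{Des}(v)$. $\Gamma(u,v)$ denotes the bottom row of $(u,v)^T$. For $x\in\mathrm{Cay}_n$, $\gamma(x)=\Gamma(1\,2\cdots n,\,x)$, and $x\sim y$ iff $\gamma(x)=\gamma(y)$. *)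

From mathcomp Require Import all_boot.
Set Implicit Arguments. Unset Strict Implicit. Unset Printing Implicit Defensive.

Definition wmax (v : seq nat) : nat := foldr maxn 0 v.

Definition cayley (n : nat) (v : seq nat) : bool :=
  [&& size v == n, all (fun a => 0 < a) v & all (fun k => k \in v) (iota 1 (wmax v))].

Definition weakly_incr_cayley (n : nat) (u : seq nat) : bool :=
  cayley n u && sorted leq u.

(* weak descent set, 1-indexed: i in Des v iff 1 <= i < size v and v(i) >= v(i+1)
   (here v(i) = nth 0 v i.-1) *)
Definition wdes (v : seq nat) : seq nat :=
  [seq i <- iota 1 (size v).-1 | nth 0 v i.-1 >= nth 0 v i].

Definition burge_word (n : nat) (u v : seq nat) : bool :=
  [&& weakly_incr_cayley n u, cayley n v & all (fun i => i \in wdes v) (wdes u)].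

Definition col_le (c d : nat * nat) : bool :=
  (c.1 < d.1) || ((c.1 == d.1) && (d.2 <= c.2)).

Definition burge_transpose (u v : seq nat) : seq (nat * nat) :=
  sort col_le (zip v u).

Definition Gamma (u v : seq nat) : seq nat := map snd (burge_transpose u v).

Definition gamma (x : seq nat) : seq nat := Gamma (iota 1 (size x)) x.

Definition gamma_equiv (x y : seq nat) : Prop := gamma x = gamma y.

From mathcomp Require Import all_boot.
From mathcomp Require Import zify.
Set Implicit Arguments.
Unset Strict Implicit.
Unset Printing Implicit Defensive.

(* A weakly increasing word u of length n is f(1) f(2) ... f(n) for a
   nondecreasing f.  Replacing the bottom entries of the columns by their
   images under a nondecreasing f keeps the columns in col_le order, and
   col_le is a total order, so sorting commutes with this relabelling:
   Gamma (f(1)...f(n)) x = f(gamma x).  Hence Gamma u x depends on x only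
   through gamma x. *)

Lemma col_le_trans : transitive col_le.
Proof.
move=> [a b] [c d] [e f]; rewrite /col_le /=.
by case/orP=> [?|/andP[/eqP ? ?]]; case/orP=> [?|/andP[/eqP ? ?]]; apply/orP; lia.
Qed.

Lemma col_le_total : total col_le.
Proof. by move=> [a b] [c d]; rewrite /col_le /=; apply/orP; lia. Qed.

Lemma col_le_anti : antisymmetric col_le.
Proof.
move=> [a b] [c d]; rewrite /col_le /= => /andP[].
by case/orP=> [?|/andP[/eqP ? ?]]; case/orP=> [?|/andP[/eqP ? ?]]; f_equal; lia.
Qed.

Lemma sort_map_homo_in (T : eqType) (leT : rel T) (f : T -> T) (s : seq T) :
  total leT -> transitive leT -> antisymmetric leT ->
  {in s &, {homo f : a b / leT a b}} ->
  sort leT (map f s) = map f (sort leT s).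
Proof.
move=> leT_total leT_tr leT_anti f_homo; apply: (sorted_eq leT_tr leT_anti).
- exact: sort_sorted.
- apply: (homo_sorted_in f_homo); last exact: sort_sorted.
  by rewrite all_sort; apply/allP.
- by rewrite perm_sort perm_map // perm_sym perm_sort.
Qed.

Lemma mem_zip2 (S T : eqType) (s : seq S) (t : seq T) (a : S) (b : T) :
  (a, b) \in zip s t -> b \in t.
Proof.
elim: s t => [|c s IHs] [|d t] //=; rewrite !inE.
by case/orP=> [/eqP[_ ->]|/IHs ->]; rewrite ?eqxx ?orbT.
Qed.

Lemma zip_map_r (S T : Type) (f : T -> T) (s : seq S) (t : seq T) :
  zip s (map f t) = map (fun c => (c.1, f c.2)) (zip s t).
Proof. by elim: s t => [|a s IHs] [|b t] //=; rewrite IHs. Qed.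

Lemma Gamma_map (f : nat -> nat) (w x : seq nat) :
  {in w &, {homo f : i j / i <= j}} ->
  Gamma (map f w) x = map f (Gamma w x).
Proof.
move=> f_homo; rewrite /Gamma /burge_transpose zip_map_r sort_map_homo_in.
- by rewrite -!map_comp.
- exact: col_le_total.
- exact: col_le_trans.
- exact: col_le_anti.
move=> [a b] [c d] /mem_zip2 bw /mem_zip2 dw; rewrite /col_le /=.
by case/orP=> [->//|/andP[-> /(f_homo _ _ dw bw) ->]]; rewrite orbT.
Qed.

Lemma map_nth_iota1 (T : Type) (x0 : T) (s : seq T) :
  [seq nth x0 s i.-1 | i <- iota 1 (size s)] = s.
Proof.
by rewrite -add1n iotaDl -map_comp (map_nth_iota0 _ (leqnn _)) take_size.
Qed.

Lemma sorted_leq_nth_pred (u : seq nat) :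
  sorted leq u ->
  {in iota 1 (size u) &, {homo (fun i => nth 0 u i.-1) : i j / i <= j}}.
Proof.
move=> u_sorted i j; rewrite !mem_iota => /andP[i_gt0 i_le] /andP[j_gt0 j_le] le_ij.
by apply: (sorted_leq_nth leq_trans leqnn) => //; rewrite ?inE; lia.
Qed.

Theorem lemma4p13 (n : nat) (u x y : seq nat) :
  burge_word n u x -> burge_word n u y -> gamma_equiv x y ->
  Gamma u x = Gamma u y.
Proof.
rewrite /burge_word /weakly_incr_cayley /cayley.
move=> /and3P[/andP[/and3P[/eqP su _ _] u_sorted] /and3P[/eqP sx _ _] _].
move=> /and3P[_ /and3P[/eqP sy _ _] _] gamma_xy.
have u_homo := sorted_leq_nth_pred u_sorted.
rewrite -(map_nth_iota1 0 u) !Gamma_map // su -[in LHS]sx -sy.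
exact: congr1 _ gamma_xy.
Qed.
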